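(* For any instance of the data described in the context, $\hat{\mathcal A}^*_{SOCP}\subseteq\hat{\mathcal A}_{SDP}$, where $\hat{\cdot}$ denotes projection onto the coordinates $(p^g,q^g)$.
   Context: Data: finite bus set $\mathcal B$, line set $\mathcal L$ (unordered pairs of distinct buses; variables $c_{ij},s_{ij}$ indexed by ordered pairs with $\{i,j\}\in\mathcal L$), $\delta(i)$ the neighbors of $i$, generator set $\mathcal G\subseteq\mathcal B$, reals $G_{ij},B_{ij}$ (lines), $G_{ii},B_{ii}$ (buses), demands $p_i^d,q_i^d$, voltage bounds $0\le\underline V_i\le\overline V_i$, generator bounds $p_i^{\min}\le p_i^{\max}$, $q_i^{\min}\le q_i^{\max}$ ($i\in\mathcal G$). Variables $p_i^g,q_i^g$ for $i\in\mathcal G$, with $p_i^g=q_i^g=0$ for $i\notin\mathcal G$. (ALT): $p_i^g-p_i^d=G_{ii}c_{ii}+\sum_{j\in\delta(i)}(G_{ij}c_{ij}-B_{ij}s_{ij})$, $q_i^g-q_i^d=-B_{ii}c_{ii}+\sum_{j\in\delta(i)}(-B_{ij}c_{ij}-G_{ij}s_{ij})$, $\underline V_i^2\le c_{ii}\le\overline V_i^2$ ($i\in\mathcal B$); $c_{ij}=c_{ji}$, $s_{ij}=-s_{ji}$ (lines); $p_i^{\min}\le p_i^g\le p_i^{\max}$, $q_i^{\min}\le q_i^g\le q_i^{\max}$ ($i\in\mathcal G$). $\mathcal A^*_{SOCP}$: set of $(p^g,q^g,c,s)$ satisfying (ALT) and $c_{ij}^2+s_{ij}^2\le c_{ii}c_{jj}$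 for each line. $\mathcal A_{SDP}$: fix one orientation per line and let $z$ be the real vector with components $c_{ij}$ (one per line), $s_{ij}$ (one per line), $c_{ii}$ (one per bus). $\mathcal A_{SDP}$ is the set of $(p^g,q^g,c,s,Z)$ satisfying (ALT), where $Z$ is a real symmetric matrix indexed by the components of $z$ with $Z-zz^T\succeq0$; for each line $Z_{c_{ij},c_{ij}}+Z_{s_{ij},s_{ij}}=Z_{c_{ii},c_{jj}}$, $Z_{c_{ij},c_{ij}}\le(\overline V_i\overline V_j)^2$, $Z_{s_{ij},s_{ij}}\le(\overline V_i\overline V_j)^2$; and for each bus $Z_{c_{ii},c_{ii}}\le(\underline V_i^2+\overline V_i^2)c_{ii}-(\underline V_i\overline V_i)^2$. *)

From HB Require Import structures.
From mathcomp Require Import all_boot all_order all_algebra.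
From mathcomp Require Import reals.
Set Implicit Arguments. Unset Strict Implicit. Unset Printing Implicit Defensive.
Import Order.TTheory GRing.Theory Num.Theory.
Local Open Scope ring_scope.

(* Buses: the finite type B.  Lines: the symmetric irreflexive relation L
   ({i,j} is a line iff L i j).  delta(i) = [pred j | L i j].
   Line/bus admittance data G i j, Bm i j (for lines, i <> j) and
   G i i, Bm i i (for buses). *)
Record opf_data (R : realType) (B : finType) := OpfData {
  L : rel B;
  G : B -> B -> R;
  Bm : B -> B -> R;
  pd : B -> R;
  qd : B -> R;
  Vlo : B -> R;
  Vhi : B -> R;
  gen : pred B;
  pmin : B -> R;
  pmax : B -> R;
  qmin : B -> R;
  qmax : B -> R
}.

Section OPF.
Variables (R : realType) (B : finType) (d : opf_data R B).

(* (ALT), together with p^g_i = q^g_i = 0 for i not a generator.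
   c, s are indexed by ordered pairs; only c i i and the c i j, s i j with
   {i,j} a line enter the constraints. *)
Definition ALT (pg qg : B -> R) (c s : B -> B -> R) : Prop :=
  [/\ (forall i, ~~ gen d i -> pg i = 0 /\ qg i = 0),
      (forall i, pg i - pd d i =
        G d i i * c i i + \sum_(j | L d i j) (G d i j * c i j - Bm d i j * s i j)),
      (forall i, qg i - qd d i =
        - Bm d i i * c i i + \sum_(j | L d i j) (- Bm d i j * c i j - G d i j * s i j)),
      (forall i, Vlo d i ^+ 2 <= c i i <= Vhi d i ^+ 2)
    & (forall i j, L d i j -> c i j = c j i /\ s i j = - s j i)] /\
  (forall i, gen d i -> pmin d i <= pg i <= pmax d i /\ qmin d i <= qg i <= qmax d i).

Definition A_SOCP (pg qg : B -> R) (c s : B -> B -> R) : Prop :=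
  ALT pg qg c s /\
  forall i j, L d i j -> c i j ^+ 2 + s i j ^+ 2 <= c i i * c j j.

(* One fixed orientation per line: orient i j selects (i,j) over (j,i). *)
Variable orient : rel B.

Definition oline := {p : B * B | L d p.1 p.2 && orient p.1 p.2}.

(* index set of the components of z: c_ij (one per line), s_ij (one per
   line), c_ii (one per bus) *)
Definition zidx := ((oline + oline) + B)%type.

Definition idx_c (e : oline) : zidx := inl (inl e).
Definition idx_s (e : oline) : zidx := inl (inr e).
Definition idx_d (i : B) : zidx := inr i.

Definition zvec (c s : B -> B -> R) (k : zidx) : R :=
  match k with
  | inl (inl e) => c (val e).1 (val e).2
  | inl (inr e) => s (val e).1 (val e).2
  | inr i => c i i
  end.

Definition psd (M : zidx -> zidx -> R) : Prop :=
  (forall a b, M a b = M b a) /\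
  forall v : zidx -> R, 0 <= \sum_(a : zidx) \sum_(b : zidx) v a * M a b * v b.

Definition A_SDP (pg qg : B -> R) (c s : B -> B -> R) (Z : zidx -> zidx -> R)
  : Prop :=
  [/\ ALT pg qg c s,
      (forall a b, Z a b = Z b a),
      psd (fun a b => Z a b - zvec c s a * zvec c s b),
      (forall e : oline,
        let i := (val e).1 in let j := (val e).2 in
        [/\ Z (idx_c e) (idx_c e) + Z (idx_s e) (idx_s e) = Z (idx_d i) (idx_d j),
            Z (idx_c e) (idx_c e) <= (Vhi d i * Vhi d j) ^+ 2
          & Z (idx_s e) (idx_s e) <= (Vhi d i * Vhi d j) ^+ 2])
    & (forall i, Z (idx_d i) (idx_d i) <=
        (Vlo d i ^+ 2 + Vhi d i ^+ 2) * c i i - (Vlo d i * Vhi d i) ^+ 2)].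

End OPF.

(* Given an SOCP-feasible point (c, s), keep the same (p^g, q^g, c, s) and take
   Z := z z^T + diag(D), where D vanishes except on the c_ij-coordinates of the
   lines, where it is the nonnegative SOCP slack c_ii c_jj - c_ij^2 - s_ij^2.
   Then Z - z z^T is diagonal with nonnegative entries, the slack makes
   Z_{c_ij,c_ij} + Z_{s_ij,s_ij} = c_ii c_jj exactly, and the remaining bounds
   follow from the voltage bounds. *)
From HB Require Import structures.
From mathcomp Require Import all_boot all_order all_algebra.
From mathcomp Require Import reals.
From mathcomp Require Import ring lra.
Set Implicit Arguments. Unset Strict Implicit. Unset Printing Implicit Defensive.
Import Order.TTheory GRing.Theory Num.Theory.
Local Open Scope ring_scope.

Lemma quad_form_diag_ge0 (R : realDomainType) (I : finType) (D : I -> R) (v : I -> R) :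
  (forall a, 0 <= D a) ->
  0 <= \sum_a \sum_b v a * ((a == b)%:R * D a) * v b.
Proof.
move=> D_ge0; apply: sumr_ge0 => a _.
rewrite (bigD1 a) //= eqxx mul1r big1 ?addr0; last first.
  by move=> b /negbTE; rewrite eq_sym => ->; rewrite mul0r mulr0 mul0r.
by rewrite mulrAC -expr2 mulr_ge0 ?sqr_ge0.
Qed.

Lemma sqr_le_chord (R : realDomainType) (a b x : R) :
  a <= x <= b -> x ^+ 2 <= (a + b) * x - a * b.
Proof. by move=> /andP[ax xb]; nra. Qed.

Section SocpToSdp.
Variables (R : realType) (B : finType) (d : opf_data R B) (orient : rel B).
Variables (c s : B -> B -> R).

Definition socp_slack (a : zidx d orient) : R :=
  match a with
  | inl (inl e) => c (val e).1 (val e).1 * c (val e).2 (val e).2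
                   - c (val e).1 (val e).2 ^+ 2 - s (val e).1 (val e).2 ^+ 2
  | _ => 0
  end.

Definition socp_lift (a b : zidx d orient) : R :=
  zvec c s a * zvec c s b + (a == b)%:R * socp_slack a.

Lemma socp_lift_sym a b : socp_lift a b = socp_lift b a.
Proof.
rewrite /socp_lift mulrC; case: eqVneq => [-> // | _].
by rewrite !mul0r.
Qed.

Hypothesis soc : forall i j, L d i j -> c i j ^+ 2 + s i j ^+ 2 <= c i i * c j j.

Lemma socp_slack_ge0 a : 0 <= socp_slack a.
Proof.
case: a => [[e|e]|i] //=; have := soc (andP (valP e)).1; lra.
Qed.

Lemma socp_lift_psd :
  psd (fun a b => socp_lift a b - zvec c s a * zvec c s b).
Proof.
split=> [a b | v]; first by rewrite socp_lift_sym mulrC.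
under eq_bigr do under eq_bigr do rewrite /socp_lift addrAC subrr add0r.
exact/quad_form_diag_ge0/socp_slack_ge0.
Qed.

End SocpToSdp.

Theorem proposition4 (R : realType) (B : finType) (d : opf_data R B)
  (orient : rel B)
  (L_irr : forall i, ~~ L d i i)
  (L_sym : forall i j, L d i j = L d j i)
  (orient_one : forall i j, L d i j -> orient i j = ~~ orient j i)
  (V_bnd : forall i, 0 <= Vlo d i <= Vhi d i)
  (p_bnd : forall i, gen d i -> pmin d i <= pmax d i)
  (q_bnd : forall i, gen d i -> qmin d i <= qmax d i) :
  forall pg qg : B -> R,
    (exists c s : B -> B -> R, A_SOCP d pg qg c s) ->
    exists (c s : B -> B -> R) (Z : zidx d orient -> zidx d orient -> R),
      A_SDP pg qg c s Z.
Proof.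
move=> pg qg [c [s [alt soc]]].
have [[_ _ _ cii_bnd _] _] := alt.
have cii_ge0 i : 0 <= c i i.
  by have /andP[+ _] := cii_bnd i; apply: le_trans; rewrite sqr_ge0.
exists c, s, (socp_lift c s); split=> //.
- exact: socp_lift_sym.
- exact: socp_lift_psd.
- move=> e /=; have /andP[Lij _] := valP e.
  set i := (val e).1 in Lij *; set j := (val e).2 in Lij *.
  have ij_neq : (idx_d d orient i == idx_d d orient j) = false.
    by apply/negbTE/eqP => -[eij]; move: Lij; rewrite eij (negbTE (L_irr _)).
  have cc_le : c i i * c j j <= (Vhi d i * Vhi d j) ^+ 2.
    have /andP[_ ci_le] := cii_bnd i; have /andP[_ cj_le] := cii_bnd j.
    by rewrite exprMn ler_pM.
  have := soc _ _ Lij.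
  rewrite /socp_lift /= ij_neq !eqxx mul0r !mul1r !addr0 -/i -/j.
  by split; nra.
- move=> i; rewrite /socp_lift /= eqxx mul1r addr0 -expr2.
  by rewrite exprMn sqr_le_chord.
Qed.
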